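(* Let $\Bbbk=\mathbb Z$ or $\mathbb Q$. Let $x,y,z$ be a basis of $H^2(BT^3;\mathbb Z)$ and let $\tilde\Gamma$ be the $3$-valent unsigned GKM graph with $T^3$-labeling on the complete bipartite graph with vertices $1,\dots,6$ and edges $16,25,34$ labeled $x$, edges $12,36,45$ labeled $y$, and edges $14,23,56$ labeled $z$ (with the connection mapping, along each edge, the edge with a given label to the edge with the same label). Let $\Gamma$ be the unsigned GKM graph of the $T^2$-action on the flag manifold $\mathrm{SU}(3)/T^2$ by left multiplication, and let $p\colon H^2(BT^3;\mathbb Z)\to H^2(BT^2;\mathbb Z)$ be an epimorphism such that $\tilde\Gamma$ extends $\Gamma$ (same graph and connection, $p\circ\alpha_{\tilde\Gamma}=\alpha_\Gamma$ modulo signs). Then $H^*_{T^3}(\tilde\Gamma;\Bbbk)$ is not a free $H^*(BT^3;\Bbbk)$-module, and the induced map $p_*\colon H^*_{T^3}(\tilde\Gamma;\Bbbk)\to H^*_{T^2}(\Gamma;\Bbbk)$, $f\mapsto p\circ f$, is not surjective.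
   Context: For a graph with axial function $\alpha$ (values in $H^2(BT;\mathbb Z)/\{\pm1\}$), the equivariant graph cohomology is $H^*_T(\Gamma;\Bbbk)=\{f\colon V\to H^*(BT;\Bbbk)\mid f(t(e))-f(i(e))\in(\alpha(e))\ \forall e\}$, a module over the polynomial ring $H^*(BT;\Bbbk)$. The GKM graph of $\mathrm{SU}(3)/T^2$ has the six $T^2$-fixed points as vertices, forms a complete bipartite graph $K_{3,3}$, and its labels at every vertex are the three positive roots of $\mathrm{SU}(3)$ modulo sign; such an epimorphism $p$ exists (sending $x,y,z$ to the three positive roots suitably). *)

From HB Require Import structures.
From mathcomp Require Import all_boot all_order all_algebra all_fingroup.
From mathcomp Require Import mpoly.
Set Implicit Arguments. Unset Strict Implicit. Unset Printing Implicit Defensive.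
Import GRing.Theory.
Local Open Scope ring_scope.

Definition dvdr (A : comNzRingType) (a b : A) : Prop := exists q : A, b = q * a.

Definition fscale (V : finType) (A : comNzRingType) (c : A) (f : {ffun V -> A})
  : {ffun V -> A} := [ffun v => c * f v].

Definition free_submodule (V : finType) (A : comNzRingType)
  (M : {ffun V -> A} -> Prop) : Prop :=
  exists B : {ffun V -> A} -> Prop,
    (forall b, B b -> M b) /\
    (forall f, M f -> exists (s : seq {ffun V -> A}) (c : {ffun V -> A} -> A),
        (forall b, b \in s -> B b) /\ f = \sum_(b <- s) fscale (c b) b) /\
    (forall (s : seq {ffun V -> A}) (c : {ffun V -> A} -> A),
        uniq s -> (forall b, b \in s -> B b) ->
        \sum_(b <- s) fscale (c b) b = 0 -> forall b, b \in s -> c b = 0).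

(* vertex n (1 <= n <= 6) *)
Definition vtx (n : nat) : 'I_6 := inord n.-1.
(* edges (a, b, l): label l = 0 means x, 1 means y, 2 means z *)
Definition tG_edges : seq (nat * nat * nat) :=
  [:: (1,6,0); (2,5,0); (3,4,0);
      (1,2,1); (3,6,1); (4,5,1);
      (1,4,2); (2,3,2); (5,6,2)]%N.
Definition lab (l : nat) : 'I_3 := inord l.

(* H^*(BT^3;R) = R[x,y,z] = {mpoly R[3]} with x,y,z = 'X_0,'X_1,'X_2.
   Equivariant graph cohomology H^*_{T^3}(Gamma~; R). *)
Definition H_tilde (R : comNzRingType) (f : {ffun 'I_6 -> {mpoly R[3]}}) : Prop :=
  forall e, e \in tG_edges ->
    dvdr ('X_(lab e.2) : {mpoly R[3]}) (f (vtx e.1.2) - f (vtx e.1.1)).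

(* H^2(BT^2;Z) = Z^2 with basis the simple roots alpha_1 = e_1 - e_2,
   alpha_2 = e_2 - e_3.  c i is the coordinate vector of e_i modulo (1,1,1),
   normalised so that e_i - e_j = c i - c j in the root basis. *)
Definition cvec (i : 'I_3) : 'cV[int]_2 :=
  \col_(k < 2) (if (i == 0 :> nat) then 1
                else if (i == 1 :> nat) then (k == 1 :> nat)%:Z else 0).
Definition root (i j : 'I_3) : 'cV[int]_2 := cvec i - cvec j.

(* A weight in Z^2 viewed as a degree-2 polynomial in H^*(BT^2;R) = R[u,v]. *)
Definition wpoly (R : comNzRingType) (w : 'cV[int]_2) : {mpoly R[2]} :=
  \sum_(k < 2) (w k 0)%:~R *: 'X_k.

(* Vertices: Weyl group S_3 = {perm 'I_3}.  Edges: w --- s_(e_i - e_j) w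
   (the transposition of i,j composed after w), labelled e_i - e_j. *)
Definition Gedge (w w' : {perm 'I_3}) (i j : 'I_3) : Prop :=
  i != j /\ forall x, w' x = tperm i j (w x).

Definition H_Gamma (R : comNzRingType) (g : {ffun {perm 'I_3} -> {mpoly R[2]}}) : Prop :=
  forall (w w' : {perm 'I_3}) (i j : 'I_3), Gedge w w' i j ->
    dvdr (wpoly R (root i j)) (g w' - g w).

(* p is given by its integer matrix P (column j = p of the j-th basis vector). *)
Definition epi (P : 'M[int]_(2,3)) : Prop :=
  forall w : 'cV[int]_2, exists v : 'cV[int]_3, P *m v = w.

Definition extends (P : 'M[int]_(2,3)) (phi : 'I_6 -> {perm 'I_3}) : Prop :=
  bijective phi /\
  forall e, e \in tG_edges ->
    exists i j : 'I_3, Gedge (phi (vtx e.1.1)) (phi (vtx e.1.2)) i j /\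
      (col (lab e.2) P = root i j \/ col (lab e.2) P = - root i j).

Definition ppoly (R : comNzRingType) (P : 'M[int]_(2,3)) (q : {mpoly R[3]}) : {mpoly R[2]} :=
  comp_mpoly [tuple wpoly R (col j P) | j < 3] q.

Definition pstar_surjective (R : comNzRingType) (P : 'M[int]_(2,3))
  (phi : 'I_6 -> {perm 'I_3}) : Prop :=
  forall g, @H_Gamma R g ->
    exists f, @H_tilde R f /\ forall v : 'I_6, g (phi v) = ppoly P (f v).

Definition conclusion (R : comNzRingType) (P : 'M[int]_(2,3))
  (phi : 'I_6 -> {perm 'I_3}) : Prop :=
  ~ free_submodule (@H_tilde R) /\ ~ pstar_surjective R P phi.

From HB Require Import structures.
From mathcomp Require Import all_boot all_order all_algebra all_fingroup.
From mathcomp Require Import mpoly ring.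
Set Implicit Arguments. Unset Strict Implicit. Unset Printing Implicit Defensive.
Import GRing.Theory.
Local Open Scope ring_scope.

(* For a class f of Gamma~ and an edge ab labelled x_l, f(b) - f(a) is a multiple of x_l,
   so it has no constant term and no linear term in x_i for i <> l.  The edges not
   labelled x_i form a 6-cycle through all vertices, hence the constant term and every
   linear coefficient of f(v) are independent of v.
   p_* is not onto: p_* preserves this property, but the class w |-> e_(w 1) of
   SU(3)/T^2 has a linear coefficient that varies.
   Not free: m = xy on {1,2,3,4}, a = yz on {3,4} and b = xz on {1,2} are classes with
   z m = x a + y b.  Comparing coordinates in a basis gives z m_i = x a_i + y b_i, so the
   coordinates m_i of m have no constant term.  Then the xy-coefficient of m(v) only
   involves constant and linear terms of the basis elements and cannot depend on v, yet
   it is 1 at vertex 1 and 0 at vertex 5.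
   Both arguments work over any nonzero commutative ring and for any P; of the
   hypotheses only the bijectivity of phi is used. *)

Section TaylorCoefficients.
Variables (R : comNzRingType) (n : nat).
Implicit Types (p q : {mpoly R[n]}) (i j l : 'I_n).

Definition cterm : {mpoly R[n]} -> R := meval (fun=> 0).
HB.instance Definition _ := GRing.RMorphism.on cterm.

Definition lcoef i : {mpoly R[n]} -> R := cterm \o mderiv i.
HB.instance Definition _ i := GRing.Additive.on (lcoef i).

Definition qcoef i j : {mpoly R[n]} -> R := lcoef j \o mderiv i.
HB.instance Definition _ i j := GRing.Additive.on (qcoef i j).

Lemma ctermX i : cterm 'X_i = 0. Proof. exact: mevalXU. Qed.

Lemma ctermZ c p : cterm (c *: p) = c * cterm p. Proof. exact: mevalZ. Qed.

Lemma lcoef1 i : lcoef i 1 = 0.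
Proof. by rewrite /lcoef /= -mpolyC1 mderivC rmorph0. Qed.

Lemma ctermMX l p : cterm ('X_l * p) = 0.
Proof. by rewrite rmorphM /= ctermX mul0r. Qed.

Lemma lcoefZ i c p : lcoef i (c *: p) = c * lcoef i p.
Proof. by rewrite /lcoef /= mderivZ ctermZ. Qed.

Lemma lcoefX l i : lcoef i 'X_l = (l == i)%:R.
Proof.
rewrite /lcoef /= mderivX mnm1E.
case: eqP => [->|_]; last by rewrite scale0r rmorph0.
have -> : (U_(i) - U_(i))%MM = 0%MM by apply/mnmP => k; rewrite !mnmE subnn.
by rewrite mpolyX0 scale1r rmorph1.
Qed.

Lemma lcoefM i p q : lcoef i (p * q) = lcoef i p * cterm q + cterm p * lcoef i q.
Proof. by rewrite /lcoef /= mderivM rmorphD /= !rmorphM. Qed.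

Lemma lcoefMX l i p : lcoef i ('X_l * p) = (l == i)%:R * cterm p.
Proof. by rewrite lcoefM lcoefX ctermX mul0r addr0. Qed.

Lemma qcoefM i j p q : qcoef i j (p * q) =
  qcoef i j p * cterm q + lcoef i p * lcoef j q + lcoef j p * lcoef i q
  + cterm p * qcoef i j q.
Proof.
rewrite /qcoef /= mderivM raddfD /= !lcoefM.
rewrite [cterm p^`M(i)]/(lcoef i p) [cterm q^`M(i)]/(lcoef i q); ring.
Qed.

Lemma cterm_eq0_mulX k i j p a b : k != i -> k != j ->
  'X_k * p = 'X_i * a + 'X_j * b -> cterm p = 0.
Proof.
move=> /negbTE ki /negbTE kj /(congr1 (lcoef k)).
by rewrite raddfD /= !lcoefMX eqxx eq_sym ki eq_sym kj !mul0r addr0 mul1r.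
Qed.

Lemma qcoefXX i j : i != j -> qcoef i j ('X_i * 'X_j) = 1.
Proof.
move=> /negbTE ij; rewrite qcoefM !ctermX !lcoefX !eqxx ij /=.
by rewrite mulr0 !mul0r mulr1 add0r !addr0.
Qed.

End TaylorCoefficients.

Section ChainRule.
Variables (R : comNzRingType) (n m : nat) (lq : n.-tuple {mpoly R[m]}).
Hypothesis cterm_lq : forall j, cterm (tnth lq j) = 0.

Lemma cterm_comp (p : {mpoly R[n]}) : cterm (p \mPo lq) = cterm p.
Proof. by rewrite /cterm comp_mpoly_meval; apply: meval_eq => j; apply: cterm_lq. Qed.

Lemma lcoef_comp (p : {mpoly R[n]}) k :
  lcoef k (p \mPo lq) = \sum_j lcoef j p * lcoef k (tnth lq j).
Proof.
pose chain p := forall k, lcoef k (p \mPo lq) = \sum_j lcoef j p * lcoef k (tnth lq j).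
have chain1 : chain 1.
  by move=> k'; rewrite rmorph1 lcoef1 big1 // => j _; rewrite lcoef1 mul0r.
have chainX j : chain 'X_j.
  move=> k'; rewrite comp_mpolyXU -tnth_nth (bigD1 j) //= lcoefX eqxx mul1r.
  by rewrite big1 ?addr0 // => j' /negbTE; rewrite lcoefX eq_sym => ->; rewrite mul0r.
have chainM p1 p2 : chain p1 -> chain p2 -> chain (p1 * p2).
  move=> h1 h2 k'; rewrite rmorphM lcoefM h1 h2 !cterm_comp mulr_suml mulr_sumr.
  by rewrite -big_split; apply: eq_bigr => j _ /=; rewrite lcoefM; ring.
elim/mpolyind: p k => [|c mon p _ _ hp] k.
  by rewrite rmorph0 !raddf0 big1 // => j _; rewrite raddf0 mul0r.
have chainX_mon : chain 'X_[mon].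
  rewrite mpolyXE_id; apply: (big_ind chain chain1 chainM) => i _.
  by elim: (mon i) => [|e he]; rewrite ?expr0 // exprS; apply: chainM.
rewrite raddfD /= comp_mpolyZ raddfD /= lcoefZ chainX_mon hp mulr_sumr -big_split.
by apply: eq_bigr => j _ /=; rewrite raddfD /= lcoefZ mulrDl mulrA.
Qed.

End ChainRule.

Lemma sumr_count_mem (M : nmodType) (I : eqType) (s t : seq I) (F : I -> M) :
  uniq s -> {subset t <= s} ->
  \sum_(i <- t) F i = \sum_(i <- s) F i *+ count_mem i t.
Proof.
move=> us; elim: t => [|x t IHt] ts.
  by rewrite big_nil big1 // => i _; rewrite mulr0n.
have xs : x \in s by apply: ts; rewrite mem_head.
rewrite big_cons IHt => [|i it]; last by apply: ts; rewrite inE it orbT.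
rewrite [RHS](eq_bigr (fun i => F i *+ (x == i) + F i *+ count_mem i t)) => [|i _].
  rewrite big_split /=; congr (_ + _).
  rewrite (bigD1_seq x) //= eqxx big1 ?addr0 // => i /negbTE.
  by rewrite eq_sym => ->.
by rewrite /= mulrnDr.
Qed.

Section FreeSubmodules.
Variables (V : finType) (A : comNzRingType).
Implicit Types (s t : seq {ffun V -> A}) (c : {ffun V -> A} -> A).

Lemma sum_fscaleE s c v :
  (\sum_(b <- s) fscale (c b) b) v = \sum_(b <- s) c b * b v.
Proof. by rewrite sum_ffunE; apply: eq_bigr => b _; rewrite ffunE. Qed.

Lemma sum_fscale_widen s t c : uniq s -> {subset t <= s} ->
  exists c', \sum_(b <- t) fscale (c b) b = \sum_(b <- s) fscale (c' b) b.
Proof.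
move=> us ts; exists (fun b => c b *+ count_mem b t); rewrite (sumr_count_mem _ us ts).
by apply: eq_bigr => b _; apply/ffunP => v; rewrite ffunMnE !ffunE mulrnAl.
Qed.

End FreeSubmodules.

Lemma vtx_val (k : nat) : (0 < k <= 6)%N -> (val (vtx k)).+1 = k.
Proof. by case: k => // k /= hk; rewrite /vtx /= inordK. Qed.

Lemma lab_ord (l : 'I_3) : lab l = l.
Proof. exact: inord_val. Qed.

Lemma vtxK (k : nat) (v : 'I_6) : k.-1 = v -> vtx k = v.
Proof. by rewrite /vtx => ->; rewrite inord_val. Qed.

(* Phrased with [k.-1] rather than [vtx k], as [inord] does not compute. *)
Definition tG_adj (i : 'I_3) : rel 'I_6 := fun v w =>
  has (fun e : nat * nat * nat => (e.2 != i) &&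
    [|| (e.1.1.-1 == v) && (e.1.2.-1 == w) | (e.1.1.-1 == w) && (e.1.2.-1 == v)])
    tG_edges.

Local Notation "''v' k" := (@Ordinal 6 k.-1 isT) (at level 0, k at level 0).

Lemma tG_adj_connected i v : connect (tG_adj i) 'v 1 v.
Proof.
have /path_connect : path (tG_adj i) 'v 1
  (if val i == 0 then [:: 'v 2; 'v 3; 'v 6; 'v 5; 'v 4]
   else if val i == 1 then [:: 'v 6; 'v 5; 'v 2; 'v 3; 'v 4]
   else [:: 'v 6; 'v 3; 'v 4; 'v 5; 'v 2]).
  by case: i => -[|[|[|]]].
by apply; case: i v => -[|[|[|//]]] ? [[|[|[|[|[|[|//]]]]]] ?].
Qed.

Lemma tG_edge_bounds e : e \in tG_edges ->
  [&& 0 < e.1.1 <= 6, 0 < e.1.2 <= 6 & e.2 < 3]%N.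
Proof. by move: e; apply/allP. Qed.

Section GraphCohomology.
Variable R : comNzRingType.

Lemma H_tilde_invariant (F : {additive {mpoly R[3]} -> R}) i f :
  (forall l p, l != i -> F ('X_l * p) = 0) -> H_tilde f ->
  forall v w, F (f v) = F (f w).
Proof.
move=> FX0 Hf.
suff toroot v : F (f v) = F (f 'v 1) by move=> v w; rewrite !toroot.
have step u w : tG_adj i u w -> F (f u) = F (f w).
  case/hasP => -[[a b] l] he /= /andP[li hab].
  have /and3P[_ _ l3] := tG_edge_bounds he.
  have [q dq] := Hf _ he.
  have /eqP : F (f (vtx b) - f (vtx a)) = 0.
    rewrite dq mulrC FX0 //; apply: contra li => /eqP <-.
    by rewrite /lab inordK.
  rewrite raddfB subr_eq0 => /eqP Fab.
  by case/orP: hab => /andP[/eqP/vtxK <- /eqP/vtxK <-].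
have closed_a : closed (tG_adj i) [pred u | F (f u) == F (f 'v 1)].
  by move=> u w /step Fuw; rewrite !inE Fuw.
have := closed_connect closed_a (tG_adj_connected i v).
by rewrite !inE eqxx => /esym/eqP.
Qed.

Lemma lcoef_H_tilde i (f : {ffun 'I_6 -> {mpoly R[3]}}) :
  H_tilde f -> forall v w, lcoef i (f v) = lcoef i (f w).
Proof.
apply: (H_tilde_invariant (F := lcoef i) (i := i)) => l p /negbTE li /=.
by rewrite lcoefMX li mul0r.
Qed.

Lemma cterm_H_tilde (f : {ffun 'I_6 -> {mpoly R[3]}}) :
  H_tilde f -> forall v w, cterm (f v) = cterm (f w).
Proof.
by apply: (H_tilde_invariant (F := @cterm R 3) (i := 0)) => l p _ /=; rewrite ctermMX.
Qed.

Definition tG_class (S : pred nat) (c : {mpoly R[3]}) :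
  {ffun 'I_6 -> {mpoly R[3]}} :=
  [ffun v => if (val v).+1 \in S then c else 0].

Lemma tG_class_H_tilde S c (ls : seq nat) :
  all (fun e : nat * nat * nat => ((e.1.1 \in S) != (e.1.2 \in S)) ==> (e.2 \in ls))
    tG_edges ->
  (forall l, l \in ls -> dvdr 'X_(lab l) c) -> H_tilde (tG_class S c).
Proof.
move=> /allP cut dvd_c [[a b] l] he /=; rewrite !ffunE.
have /and3P[ab6 bb6 _] := tG_edge_bounds he.
rewrite !vtx_val //; move: (cut _ he) => /=.
case: (a \in S); case: (b \in S) => /= ls_l; try by exists 0; rewrite subrr mul0r.
  by have [q ->] := dvd_c l ls_l; exists (- q); rewrite sub0r mulNr.
by have [q ->] := dvd_c l ls_l; exists q; rewrite subr0.
Qed.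

End GraphCohomology.

Section NotSurjective.
Variable R : comNzRingType.

Lemma wpolyB a b : wpoly R (a - b) = wpoly R a - wpoly R b.
Proof. by rewrite /wpoly -sumrB; apply: eq_bigr => k _; rewrite !mxE intrB scalerBl. Qed.

Lemma lcoef_wpoly w k : lcoef k (wpoly R w) = (w k 0)%:~R.
Proof.
rewrite /wpoly raddf_sum (bigD1 k) //= lcoefZ lcoefX eqxx mulr1 big1 ?addr0 //.
by move=> j /negbTE jk; rewrite lcoefZ lcoefX jk mulr0.
Qed.

Lemma cterm_wpoly w : cterm (wpoly R w) = 0.
Proof. by rewrite /wpoly rmorph_sum big1 // => j _; rewrite /= ctermZ ctermX mulr0. Qed.

Lemma lcoef_ppoly P (q : {mpoly R[3]}) k :
  lcoef k (ppoly P q) = \sum_j lcoef j q * (P k j)%:~R.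
Proof.
rewrite /ppoly lcoef_comp => [|j]; last by rewrite tnth_mktuple cterm_wpoly.
by apply: eq_bigr => j _; rewrite tnth_mktuple lcoef_wpoly !mxE.
Qed.

Definition weight_class : {ffun {perm 'I_3} -> {mpoly R[2]}} :=
  [ffun w : {perm 'I_3} => wpoly R (cvec (w 0))].

Lemma weight_class_H_Gamma : H_Gamma weight_class.
Proof.
move=> w w' i j [_ w'E]; rewrite !ffunE w'E /root.
case: tpermP => [->|->|_ _]; last by exists 0; rewrite subrr mul0r.
  by exists (-1); rewrite wpolyB mulN1r opprB.
by exists 1; rewrite wpolyB mul1r.
Qed.

Lemma not_pstar_surjective P phi : bijective phi -> ~ pstar_surjective R P phi.
Proof.
move=> [psi phiK psiK] /(_ _ weight_class_H_Gamma) [f [Hf fg]].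
have lcoef0_const v w :
    lcoef 0 (weight_class (phi v)) = lcoef 0 (weight_class (phi w)).
  by rewrite !fg !lcoef_ppoly; apply: eq_bigr => j _; rewrite (lcoef_H_tilde j Hf v w).
have := lcoef0_const (psi 1%g) (psi (tperm 0 2)).
rewrite !psiK !ffunE !lcoef_wpoly perm1 tpermL !mxE /= => /eqP.
by rewrite oner_eq0.
Qed.

End NotSurjective.

Section NotFree.
Variable R : comNzRingType.

Definition class_xy := @tG_class R [pred k | k <= 4]%N ('X_0 * 'X_1).
Definition class_yz := @tG_class R [pred k | 3 <= k <= 4]%N ('X_1 * 'X_2).
Definition class_xz := @tG_class R [pred k | k <= 2]%N ('X_0 * 'X_2).

Lemma class_xy_H_tilde : H_tilde class_xy.
Proof.
apply: (tG_class_H_tilde (ls := [:: 0; 1]%N)) => // l; rewrite !inE => /orP[]/eqP->.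
  by rewrite (lab_ord 0); exists 'X_1; rewrite mulrC.
by rewrite (lab_ord 1); exists 'X_0.
Qed.

Lemma class_yz_H_tilde : H_tilde class_yz.
Proof.
apply: (tG_class_H_tilde (ls := [:: 1; 2]%N)) => // l; rewrite !inE => /orP[]/eqP->.
  by rewrite (lab_ord 1); exists 'X_2; rewrite mulrC.
by rewrite (lab_ord 2); exists 'X_1.
Qed.

Lemma class_xz_H_tilde : H_tilde class_xz.
Proof.
apply: (tG_class_H_tilde (ls := [:: 0; 2]%N)) => // l; rewrite !inE => /orP[]/eqP->.
  by rewrite (lab_ord 0); exists 'X_2; rewrite mulrC.
by rewrite (lab_ord 2); exists 'X_0.
Qed.

Lemma class_relation v :
  'X_2 * class_xy v = 'X_0 * class_yz v + 'X_1 * class_xz v.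
Proof.
rewrite !ffunE !inE; case: v => -[|[|[|[|[|[|//]]]]]] ? /=;
  rewrite ?mulr0 ?addr0 ?add0r //; ring.
Qed.

Lemma qcoef_span_H_tilde i j (s : seq {ffun 'I_6 -> {mpoly R[3]}}) c :
  (forall b, b \in s -> H_tilde b /\ cterm (c b) = 0) ->
  forall v w, qcoef i j ((\sum_(b <- s) fscale (c b) b) v) =
              qcoef i j ((\sum_(b <- s) fscale (c b) b) w).
Proof.
move=> hs v w; rewrite !sum_fscaleE !raddf_sum.
apply: eq_big_seq => b /hs[Hb cb0] /=.
rewrite !qcoefM cb0 !mul0r !addr0 (cterm_H_tilde Hb v w).
by rewrite (lcoef_H_tilde i Hb v w) (lcoef_H_tilde j Hb v w).
Qed.

Lemma not_free_H_tilde : ~ free_submodule (@H_tilde R).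
Proof.
move=> [B [BM [Bspan Bfree]]].
have [s1 [c1 [s1B E1]]] := Bspan _ class_xy_H_tilde.
have [s2 [c2 [s2B E2]]] := Bspan _ class_yz_H_tilde.
have [s3 [c3 [s3B E3]]] := Bspan _ class_xz_H_tilde.
pose s := undup (s1 ++ s2 ++ s3).
have us : uniq s := undup_uniq _.
have sB b : b \in s -> B b.
  by rewrite mem_undup !mem_cat => /or3P[]; [apply: s1B | apply: s2B | apply: s3B].
have [cxy Exy] : exists c, class_xy = \sum_(b <- s) fscale (c b) b.
  by rewrite E1; apply: sum_fscale_widen => // b b1; rewrite mem_undup !mem_cat b1.
have [cyz Eyz] : exists c, class_yz = \sum_(b <- s) fscale (c b) b.
  by rewrite E2; apply: sum_fscale_widen => // b b2; rewrite mem_undup !mem_cat b2 orbT.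
have [cxz Exz] : exists c, class_xz = \sum_(b <- s) fscale (c b) b.
  by rewrite E3; apply: sum_fscale_widen => // b b3; rewrite mem_undup !mem_cat b3 !orbT.
have coef_relation b : b \in s -> 'X_2 * cxy b = 'X_0 * cyz b + 'X_1 * cxz b.
  move=> bs; apply/eqP; rewrite -subr_eq0; apply/eqP.
  apply: (Bfree s (fun b => 'X_2 * cxy b - ('X_0 * cyz b + 'X_1 * cxz b)) us sB _ b bs).
  apply/ffunP => v; rewrite sum_fscaleE ffunE.
  have /eqP := class_relation v; rewrite Exy Eyz Exz !sum_fscaleE !mulr_sumr.
  rewrite -subr_eq0 -big_split -sumrB /= => /eqP E; rewrite -[RHS]E.
  by apply: eq_bigr => b' _; ring.
have cxy_span b : b \in s -> H_tilde b /\ cterm (cxy b) = 0.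
  move=> bs; split; first exact/BM/sB.
  exact: (cterm_eq0_mulX (k := 2) (i := 0) (j := 1) _ _ (coef_relation b bs)).
have := qcoef_span_H_tilde 0 1 cxy_span 'v 1 'v 5.
by rewrite -Exy !ffunE !inE /= qcoefXX // raddf0 => /eqP; rewrite oner_eq0.
Qed.

End NotFree.

Theorem proposition5p1 (P : 'M[int]_(2,3)) (phi : 'I_6 -> {perm 'I_3}) :
  epi P -> extends P phi ->
  conclusion int P phi /\ conclusion rat P phi.
Proof.
move=> _ [phi_bij _].
by split; split; [apply: not_free_H_tilde | apply: not_pstar_surjective
                 | apply: not_free_H_tilde | apply: not_pstar_surjective].
Qed.
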